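(* Let $n,m\in\mathbb{N}$. If for $i\in I_{nm}$ there exist $j,j'\in I_n$, $k,k'\in I_m$ and $\gamma,\gamma'\in SL(2,\mathbb{Z})$ such that $\gamma A_jA_k=A_i=\gamma'A_{j'}A_{k'}$, then $j=j'$, $k=k'$ and $\gamma=\gamma'$.
   Context: For $N\in\mathbb{N}$: $I_N=\{[x:y]_N:\gcd(x,y,N)=1\}$, where $[x:y]_N$ is the class of $(x,y)\in\mathbb{Z}^2$ under $(x,y)\sim(x',y')$ iff $x'\equiv kx$, $y'\equiv ky\pmod N$ for some $k$ with $\gcd(k,N)=1$. The map $(c,b)\mapsto[c:d_N(c,b)]_N$ with $d_N(c,b)=\min_{0\le k\le c-1}\{c+b+kN/c:\gcd(c,b+kN/c)=1\}$ is a bijection from $\{(c,b):c\ge1,\ c\mid N,\ 0\le b\le N/c-1,\ \gcd(c,b,N/c)=1\}$ onto $I_N$, and for $i\in I_N$ one sets $A_i=\begin{pmatrix}c&b\\0&N/c\end{pmatrix}$ where $(c,b)$ corresponds to $i$. *)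

From HB Require Import structures.
From mathcomp Require Import all_boot all_order all_algebra.
Set Implicit Arguments. Unset Strict Implicit. Unset Printing Implicit Defensive.
Import Order.TTheory GRing.Theory Num.Theory.
Local Open Scope ring_scope.

(* Elements of I_N are represented by pairs (x,y) in Z^2; two
   representatives denote the same element [x:y]_N iff [equivI N]. *)

Definition inI (N : nat) (p : int * int) : bool :=
  gcdz (gcdz p.1 p.2) N%:Z == 1.

Definition equivI (N : nat) (p q : int * int) : Prop :=
  exists k : int, coprimez k N%:Z /\
    (q.1 == k * p.1 %[mod N%:Z])%Z /\ (q.2 == k * p.2 %[mod N%:Z])%Z.

Definition Pset (N c b : nat) : bool :=
  [&& (0 < c)%N, (c %| N)%N, (b < N %/ c)%N & gcdn (gcdn c b) (N %/ c) == 1%N].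

Definition dN (N c b : nat) : nat :=
  \big[minn/(c + b + c * (N %/ c))%N]_(k < c | coprime c (b + k * (N %/ c)))
     (c + b + k * (N %/ c))%N.

Definition Amat (N c b : nat) : 'M[int]_2 :=
  \matrix_(r < 2, s < 2)
    (if r == 0 then (if s == 0 then c%:Z else b%:Z)
     else (if s == 0 then 0 else (N %/ c)%N%:Z)).

(* isA N i M  :<->  M = A_i, i.e. M = A_(c,b) where (c,b) is the (unique)
   parameter with [c : d_N(c,b)]_N = i. *)
Definition isA (N : nat) (i : int * int) (M : 'M[int]_2) : Prop :=
  exists c b : nat, Pset N c b /\ equivI N ((c%:Z), (dN N c b)%:Z) i
                    /\ M = Amat N c b.

Definition inSL2Z (g : 'M[int]_2) : Prop := \det g = 1.

(* Every A_(c,b) is the upper triangular matrix [[c, b], [0, N/c]] with positive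
   diagonal, hence so is A_j A_k; a matrix of determinant 1 sending one such
   matrix to another must be [[1, t], [0, 1]].  Comparing entries,
   A_i = A_(c,B) with c = a e, N/c = (n/a)(m/e) and B = a f + (b + t n/a) m/e.
   Since gcd(a, m/e) divides c, B and N/c, it is 1; so e = gcd(c, m) and a = c/e
   are determined by i, then f is the residue of B/a modulo m/e, and finally
   b and t are the remainder and quotient of (B - a f)/(m/e) divided by n/a. *)

From mathcomp Require Import all_boot all_order all_algebra zify ring.
Set Implicit Arguments. Unset Strict Implicit. Unset Printing Implicit Defensive.
Import Order.TTheory GRing.Theory Num.Theory.
Local Open Scope ring_scope.

Lemma ord2P (i : 'I_2) : i = 0 \/ i = 1.
Proof. by case: i => [[|[|//]]] ?; [left | right]; apply: val_inj. Qed.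

Section UpperTriangular.
Variable R : comPzRingType.

Definition upper2 (x y z : R) : 'M[R]_2 :=
  \matrix_(r < 2, s < 2)
    (if r == 0 then (if s == 0 then x else y) else (if s == 0 then 0 else z)).

Lemma mulmx2E (A B : 'M[R]_2) i j : (A *m B) i j = A i 0 * B 0 j + A i 1 * B 1 j.
Proof.
by rewrite mxE !big_ord_recl big_ord0 addr0 (_ : lift ord0 ord0 = 1) //; apply: val_inj.
Qed.

Lemma det_mx2 (A : 'M[R]_2) : \det A = A 0 0 * A 1 1 - A 0 1 * A 1 0.
Proof.
rewrite (expand_det_row _ 0) !big_ord_recl big_ord0 addr0 /cofactor !det_mx11 !mxE /=.
rewrite !expr0 !expr1 mul1r mulN1r mulrN.
by congr (A _ _ * A _ _ - A _ _ * A _ _); apply: val_inj.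
Qed.

Lemma upper2_eq (A : 'M[R]_2) : A 1 0 = 0 -> A = upper2 (A 0 0) (A 0 1) (A 1 1).
Proof.
by move=> A10; apply/matrixP => i j; rewrite mxE; case: (ord2P i) => ->; case: (ord2P j) => ->.
Qed.

Lemma upper2_inj x y z x' y' z' :
  upper2 x y z = upper2 x' y' z' -> [/\ x = x', y = y' & z = z'].
Proof.
move/matrixP=> E; have := E 0 0; have := E 0 1; have := E 1 1.
by rewrite !mxE /= => ? ? ?.
Qed.

Lemma mulmx_upper2 x y z x' y' z' :
  upper2 x y z *m upper2 x' y' z' = upper2 (x * x') (x * y' + y * z') (z * z').
Proof.
apply/matrixP => i j; rewrite mulmx2E !mxE.
by case: (ord2P i) => ->; case: (ord2P j) => ->; rewrite /= ?mulr0 ?mul0r ?addr0 ?add0r.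
Qed.

End UpperTriangular.

Lemma unimodular_upper2 (g : 'M[int]_2) (x y z x' y' z' : int) :
  \det g = 1 -> x != 0 -> 0 < z -> 0 < z' ->
  g *m upper2 x y z = upper2 x' y' z' -> g = upper2 1 (g 0 1) 1.
Proof.
move=> dg x0 z0 z'0 E.
have entry i j : (g *m upper2 x y z) i j = upper2 x' y' z' i j by rewrite E.
have g10 : g 1 0 = 0.
  move: (entry 1 0); rewrite mulmx2E !mxE /= mulr0 addr0 => /eqP.
  by rewrite mulf_eq0 (negPf x0) orbF => /eqP.
have g11 : 0 < g 1 1.
  move: (entry 1 1); rewrite mulmx2E !mxE /= g10 mul0r add0r => g11z.
  by rewrite -(pmulr_lgt0 _ z0) g11z.
rewrite det_mx2 g10 mulr0 subr0 in dg.
have g00 : 0 < g 0 0 by rewrite -(pmulr_lgt0 _ g11) dg.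
have [g00E g11E] : g 0 0 = 1 /\ g 1 1 = 1.
  by move: (g 0 0) (g 1 1) dg g00 g11 => u v; nia.
by rewrite {1}(upper2_eq g10) g00E g11E.
Qed.

Lemma AmatE N c b : Amat N c b = upper2 c%:Z b%:Z (N %/ c)%:Z.
Proof. by []. Qed.

Lemma Pset_gt0 N c b : Pset N c b -> (0 < c)%N /\ (0 < N %/ c)%N.
Proof. by case/and4P => c0 _ bc _; split => //; apply: leq_ltn_trans bc. Qed.

Lemma unimodular_mulmx_Amat n m a b e f c B (g : 'M[int]_2) :
  \det g = 1 -> Pset n a b -> Pset m e f -> Pset (n * m) c B ->
  g *m Amat n a b *m Amat m e f = Amat (n * m) c B ->
  [/\ g = upper2 1 (g 0 1) 1, c = (a * e)%N, ((n * m) %/ c = n %/ a * (m %/ e))%N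
    & B%:Z = a%:Z * f%:Z + (b%:Z + g 0 1 * (n %/ a)%:Z) * (m %/ e)%:Z].
Proof.
move=> dg /Pset_gt0 [a0 d0] /Pset_gt0 [e0 h0] /Pset_gt0 [_ D0].
rewrite !AmatE -mulmxA mulmx_upper2 => E.
have gE : g = upper2 1 (g 0 1) 1 by apply: unimodular_upper2 dg _ _ _ E; lia.
move: E; rewrite {1}gE mulmx_upper2 => /upper2_inj [cE BE DE].
split => //; [lia | lia | rewrite -BE; ring].
Qed.

Lemma Pset_coprime_factor N c B a e d h f (s : int) :
  Pset N c B -> c = (a * e)%N -> (N %/ c = d * h)%N ->
  B%:Z = a%:Z * f%:Z + s * h%:Z -> coprime a h.
Proof.
case/and4P=> _ _ _ /eqP gcd1 cE DE BE.
have dvdB : (gcdn a h %| B)%N.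
  suff : ((gcdn a h)%:Z %| B%:Z)%Z by rewrite dvdzE.
  by rewrite BE; apply: rpredD; [apply: dvdz_mulr | apply: dvdz_mull];
    rewrite dvdzE ?dvdn_gcdl ?dvdn_gcdr.
rewrite /coprime -dvdn1 -gcd1 !dvdn_gcd dvdB DE cE.
by rewrite dvdn_mulr ?dvdn_mull ?dvdn_gcdl ?dvdn_gcdr.
Qed.

Lemma coprimez_mulD_uniq (a h x x' y y' : int) :
  coprimez a h -> 0 <= x < h -> 0 <= x' < h ->
  a * x + y * h = a * x' + y' * h -> x = x' /\ y = y'.
Proof.
move=> co hx hx' E.
have xE : x = x'.
  rewrite -(modz_small hx) -(modz_small hx'); apply/eqP.
  rewrite eqz_mod_dvd -(Gauss_dvdzr _ (_ : coprimez h a)) 1?coprimez_sym //.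
  by apply/dvdzP; exists (y' - y); lia.
split => //; apply: (mulIf (_ : h != 0)); lia.
Qed.

Lemma Pset_factor_uniq n m c B a b e f a' b' e' f' (t t' : int) :
  Pset n a b -> Pset m e f -> Pset n a' b' -> Pset m e' f' -> Pset (n * m) c B ->
  c = (a * e)%N -> c = (a' * e')%N ->
  ((n * m) %/ c = n %/ a * (m %/ e))%N -> ((n * m) %/ c = n %/ a' * (m %/ e'))%N ->
  B%:Z = a%:Z * f%:Z + (b%:Z + t * (n %/ a)%:Z) * (m %/ e)%:Z ->
  B%:Z = a'%:Z * f'%:Z + (b'%:Z + t' * (n %/ a')%:Z) * (m %/ e')%:Z ->
  [/\ a = a', b = b', e = e', f = f' & t = t'].
Proof.
move=> Pa Pe Pa' Pe' P cE cE' DE DE' BE BE'.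
have co := Pset_coprime_factor P cE DE BE.
have co' := Pset_coprime_factor P cE' DE' BE'.
case/and4P: Pa Pa' => _ _ bd _ /and4P[_ _ bd' _].
case/and4P: Pe Pe' => e0 em fh _ /and4P[_ em' fh' _].
have gcdn_cm x y : (y %| m)%N -> coprime x (m %/ y) -> gcdn (x * y) m = y.
  by move=> ym cxy; rewrite -(divnK ym) -muln_gcdl (eqP cxy) mul1n.
have eE : e = e' by rewrite -(gcdn_cm a e) // -(gcdn_cm a' e') // -cE -cE'.
subst e'; have aE : a = a' by apply/eqP; rewrite -(eqn_pmul2r e0) -cE cE'.
subst a'; set d := (n %/ a)%N; set h := (m %/ e)%N.
have [fE sE] : f%:Z = f'%:Z /\ b%:Z + t * d%:Z = b'%:Z + t' * d%:Z.
  apply: (@coprimez_mulD_uniq a h); first by rewrite coprimezE.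
  - lia.
  - lia.
  - by rewrite -BE -BE'.
have [bE tE] : b%:Z = b'%:Z /\ t = t'.
  apply: (@coprimez_mulD_uniq 1 d); first by rewrite /coprimez gcd1z.
  - lia.
  - lia.
  - by rewrite !mul1r.
by split => //; lia.
Qed.

Lemma eqz_modM_trans (N k k' x y z : int) :
  (y == k * x %[mod N])%Z -> (z == k' * y %[mod N])%Z -> (z == k' * k * x %[mod N])%Z.
Proof.
rewrite !eqz_mod_dvd => yx zy.
have -> : z - k' * k * x = (z - k' * y) + k' * (y - k * x) by ring.
by rewrite rpredD ?dvdz_mull.
Qed.

Lemma eqz_mod_inv (N k u x y : int) :
  (u * k == 1 %[mod N])%Z -> (y == k * x %[mod N])%Z -> (x == u * y %[mod N])%Z.
Proof.
rewrite !eqz_mod_dvd => uk yx.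
have -> : x - u * y = - (u * (y - k * x)) - (u * k - 1) * x by ring.
by apply: rpredB; [rewrite rpredN; apply: dvdz_mull | apply: dvdz_mulr].
Qed.

Lemma equivI_sym N p q : equivI N p q -> equivI N q p.
Proof.
case=> k [/coprimezP [[u v] /= uv] [qp1 qp2]].
have uk : (u * k == 1 %[mod N%:Z])%Z.
  by rewrite eqz_mod_dvd; apply/dvdzP; exists (- v); rewrite -uv; ring.
exists u; split; last by split; apply: eqz_mod_inv uk _.
by apply/coprimezP; exists (k, v); rewrite /= mulrC.
Qed.

Lemma equivI_trans N p q r : equivI N p q -> equivI N q r -> equivI N p r.
Proof.
case=> k [ck [qp1 qp2]] [k' [ck' [rq1 rq2]]].
exists (k' * k); split; first by rewrite coprimezMl ck ck'.
by split; [exact: eqz_modM_trans qp1 rq1 | exact: eqz_modM_trans qp2 rq2].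
Qed.

Theorem mainTheorem14 (n m : nat) (i j j' k k' : int * int)
  (g g' Ai Aj Aj' Ak Ak' : 'M[int]_2) :
  inI (n * m) i -> inI n j -> inI n j' -> inI m k -> inI m k' ->
  inSL2Z g -> inSL2Z g' ->
  isA (n * m) i Ai -> isA n j Aj -> isA n j' Aj' -> isA m k Ak -> isA m k' Ak' ->
  g *m Aj *m Ak = Ai -> g' *m Aj' *m Ak' = Ai ->
  equivI n j j' /\ equivI m k k' /\ g = g'.
Proof.
move=> _ _ _ _ _ dg dg' [c [B [P [_ ->]]]].
move=> [a [b [Pa [Ej ->]]]] [a' [b' [Pa' [Ej' ->]]]].
move=> [e [f [Pe [Ek ->]]]] [e' [f' [Pe' [Ek' ->]]]] H H'.
have [gE cE DE BE] := unimodular_mulmx_Amat dg Pa Pe P H.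
have [gE' cE' DE' BE'] := unimodular_mulmx_Amat dg' Pa' Pe' P H'.
have [aE bE eE fE tE] := Pset_factor_uniq Pa Pe Pa' Pe' P cE cE' DE DE' BE BE'.
subst a' b' e' f'; split; [|split].
- exact: equivI_trans (equivI_sym Ej) Ej'.
- exact: equivI_trans (equivI_sym Ek) Ek'.
- by rewrite gE gE' tE.
Qed.
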